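(* Suppose that for all positive integers $s,t,k$ with $st \le k^2$ one has $R(s,t) \le R(k,k)$. Then \[ \limsup_{k\to\infty} \frac{\log(R(k,k))}{k} = \limsup_{t\to\infty} \max_{1 \le s \le t} \frac{\log(R(s,t))}{\sqrt{st}}. \]
   Context: All logarithms are in base 2. For positive integers $s,t$, the Ramsey number $R(s,t)$ is the minimum $n$ such that every red/blue edge-coloring of the complete graph $K_n$ contains a red clique on $s$ vertices or a blue clique on $t$ vertices. *)

From HB Require Import structures.
From mathcomp Require Import all_boot all_order all_algebra.
From mathcomp Require Import all_classical all_reals all_analysis.
Set Implicit Arguments. Unset Strict Implicit. Unset Printing Implicit Defensive.
Import Order.TTheory GRing.Theory Num.Theory.

(* A red/blue edge-colouring of K_n: a colour (true = red, false = blue)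
   for each 2-element subset {x,y} of the vertex set 'I_n
   (values on other subsets are irrelevant). *)
Definition mono_clique n (c : {ffun {set 'I_n} -> bool}) (b : bool)
  (S : {set 'I_n}) : bool :=
  [forall x in S, forall y in S, (x != y) ==> (c [set x; y] == b)].

Definition ramsey_prop (s t n : nat) : bool :=
  [forall c : {ffun {set 'I_n} -> bool},
     [exists S : {set 'I_n}, (#|S| == s) && mono_clique c true S] ||
     [exists S : {set 'I_n}, (#|S| == t) && mono_clique c false S]].

(* R(s,t): the minimum such n (it exists by Ramsey's theorem; 0 is a junk
   value that never occurs). *)
Definition ramsey (s t : nat) : nat :=
  match pselect (exists n, ramsey_prop s t n) with
  | left H => ex_minn H
  | right _ => 0%N
  end.

Definition log2 {R : realType} (x : R) : R := (ln x / ln 2)%R.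

From HB Require Import structures.
From mathcomp Require Import all_boot all_order all_algebra.
From mathcomp Require Import all_classical all_reals all_analysis.
From mathcomp Require Import lra zify.
Import Order.TTheory GRing.Theory Num.Theory.
Local Open Scope ring_scope.

(* Taking s = t bounds the diagonal ratio by the off-diagonal maximum termwise.
   Conversely, if log R(k,k) <= (L + e) k for all large k, then for 1 <= s <= t
   put k = floor(sqrt(st)) + 1: the hypothesis gives R(s,t) <= R(k,k), hence
   log R(s,t) <= (L + e)(sqrt(st) + 1), and dividing by sqrt(st) >= sqrt(t)
   gives at most L + 2e once t is large. *)

Section limn_esup_near.
Context {R : realType}.
Implicit Types u v : (\bar R)^nat.
Local Open Scope classical_set_scope.
Local Open Scope ereal_scope.

Lemma limn_esup_le_ereal_sup u {V : set nat} :
  \oo V -> limn_esup u <= ereal_sup (u @` V).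
Proof.
by move=> ooV; rewrite /limn_esup limf_esupE; apply: ereal_inf_lbound; exists V.
Qed.

Lemma limn_esup_lt_near u c :
  limn_esup u < c -> \forall n \near \oo, u n < c.
Proof.
rewrite /limn_esup limf_esupE => /ereal_inf_lt [_ [V ooV <-] supVc].
apply: filterS ooV => n Vn; apply: le_lt_trans supVc.
by apply: ereal_sup_ubound; exists n.
Qed.

Lemma limn_esup_le_near u c :
  (\forall n \near \oo, u n <= c) -> limn_esup u <= c.
Proof.
move=> ooV; apply: le_trans (limn_esup_le_ereal_sup _ ooV) _.
by apply: ge_ereal_sup => _ [n Vn <-].
Qed.

Lemma le_limn_esup_near u v :
  (\forall n \near \oo, u n <= v n) -> limn_esup u <= limn_esup v.
Proof.
move=> ooP; rewrite [limn_esup v]/limn_esup limf_esupE.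
apply: le_ereal_inf_tmp => _ [V ooV <-].
apply: le_trans (limn_esup_le_ereal_sup _ (filterI ooP ooV)) _.
apply: ge_ereal_sup => _ [n [un_le_vn Vn] <-].
by apply: le_trans un_le_vn _; apply: ereal_sup_ubound; exists n.
Qed.

End limn_esup_near.

Section diag_offdiag_rates.
Local Open Scope classical_set_scope.
Context {R : realType} (g : nat -> nat -> R).
Hypothesis g_diag_ge0 : forall k, 0 <= g k k.
Hypothesis g_le_diag : forall s t k : nat, (0 < s)%N -> (0 < t)%N -> (0 < k)%N ->
  (s * t <= k ^ 2)%N -> g s t <= g k k.

Definition diag_rate k : \bar R := (g k k / k%:R)%:E.

Definition offdiag_rate t : \bar R :=
  \big[Order.max/-oo%E]_(1 <= s < t.+1) (g s t / Num.sqrt ((s * t)%:R))%:E.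

Lemma diag_rate_ge0 k : (0 <= diag_rate k)%E.
Proof. by rewrite lee_fin divr_ge0. Qed.

Lemma diag_rate_le_offdiag_rate t : (0 < t)%N -> (diag_rate t <= offdiag_rate t)%E.
Proof.
move=> t_gt0; have := @le_bigmax_seq _ _ _ (index_iota 1 t.+1) -oo%E t xpredT
  (fun s => (g s t / Num.sqrt ((s * t)%:R))%:E).
rewrite mem_index_iota t_gt0 ltnSn => /(_ isT isT).
by rewrite natrM -expr2 sqrtr_sqr normr_nat.
Qed.

Lemma offdiag_ratio_le (c : R) N s t : 0 <= c ->
  (forall k, (N <= k)%N -> g k k <= c * k%:R) ->
  (N ^ 2 <= t)%N -> (0 < s)%N -> (0 < t)%N ->
  g s t / Num.sqrt ((s * t)%:R) <= c + c / Num.sqrt ((s * t)%:R).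
Proof.
move=> c_ge0 g_le_c Nt s_gt0 t_gt0.
set q := Num.sqrt _; set k := (Num.truncn q).+1.
have q_gt0 : 0 < q by rewrite sqrtr_gt0 ltr0n muln_gt0 s_gt0.
have k_le_q1 : k%:R <= q + 1 by rewrite -natr1 lerD2r truncn_le ltW.
have st_lt_k2 : (s * t < k ^ 2)%N.
  rewrite -(ltr_nat R) natrX -(sqr_sqrtr (ler0n _ (s * t))).
  by rewrite ltrXn2r ?sqrtr_ge0 ?truncnS_gt.
have N_le_k : (N <= k)%N by nia.
have gst_le : g s t <= c * (q + 1).
  apply: le_trans (g_le_diag _ _ _ s_gt0 t_gt0 (ltn0Sn _) (ltnW st_lt_k2)) _.
  by apply: le_trans (g_le_c _ N_le_k) _; rewrite ler_wpM2l.
by rewrite ler_pdivrMr // mulrDl divfK ?gt_eqF //; lra.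
Qed.

Lemma offdiag_rate_le_near c e : 0 < e -> 0 <= c ->
  (\forall k \near \oo, g k k <= c * k%:R) ->
  \forall t \near \oo, (offdiag_rate t <= (c + e)%:E)%E.
Proof.
move=> e_gt0 c_ge0 [N _ g_le_c]; near=> t.
rewrite /offdiag_rate big_seq_cond; apply: bigmax_le => [|s]; first exact: leNye.
rewrite andbT mem_index_iota => /andP[s_gt0 s_le_t].
have t_gt0 : (0 < t)%N by apply: leq_trans s_gt0 _; rewrite -ltnS.
have Nt : (N ^ 2 <= t)%N by near: t; exact: nbhs_infty_ge.
rewrite lee_fin; apply: le_trans (offdiag_ratio_le _ _ _ _ c_ge0 g_le_c Nt s_gt0 t_gt0) _.
have q_gt0 : 0 < Num.sqrt ((s * t)%:R : R) by rewrite sqrtr_gt0 ltr0n muln_gt0 s_gt0.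
rewrite lerD2l ler_pdivrMr // -ler_pdivrMl // mulrC.
have ce_le_t : (c / e) ^+ 2 <= t%:R by near: t; exact: nbhs_infty_ger.
have ce_ge0 : 0 <= c / e by rewrite divr_ge0 // ltW.
rewrite -(ger0_norm ce_ge0) -sqrtr_sqr ler_sqrt ?ler0n //.
by apply: le_trans ce_le_t _; rewrite ler_nat leq_pmull.
Unshelve. all: by end_near.
Qed.

Theorem limn_esup_diag_rate : limn_esup diag_rate = limn_esup offdiag_rate.
Proof.
apply/eqP; rewrite eq_le; apply/andP; split.
  apply: le_limn_esup_near; near=> t; apply: diag_rate_le_offdiag_rate.
  by near: t; exact: nbhs_infty_gt.
have L_ge0 : (0 <= limn_esup diag_rate)%E.
  by apply: limf_esup_ge0 diag_rate_ge0; exact: filter_not_empty.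
case L_eq : (limn_esup diag_rate) L_ge0 => [r| |] //; last by move=> _; exact: leey.
rewrite lee_fin => r_ge0; apply/lee_addgt0Pr => e e_gt0.
have e2_gt0 : 0 < e / 2 by rewrite divr_gt0.
have diag_lt : \forall k \near \oo, (diag_rate k < (r + e / 2)%:E)%E.
  by apply: limn_esup_lt_near; rewrite L_eq lte_fin ltrDl.
rewrite (splitr e) -EFinD addrA; apply: limn_esup_le_near.
apply: offdiag_rate_le_near => //; first by rewrite addr_ge0 // ltW.
near=> k; have k_gt0 : (0 < k)%N by near: k; exact: nbhs_infty_gt.
rewrite -ler_pdivrMr ?ltr0n //; apply/ltW; rewrite -lte_fin.
by near: k; exact: diag_lt.
Unshelve. all: by end_near.
Qed.

End diag_offdiag_rates.

Section log2_natr.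
Context {R : realType}.

Lemma ln2_gt0 : 0 < ln (2 : R).
Proof. by rewrite ln_gt0 // ltr1n. Qed.

(* The case [n = 0] relies on the junk value [ln 0 = 0]. *)
Lemma log2_natr_ge0 n : 0 <= log2 (n%:R : R).
Proof.
apply: divr_ge0; last exact: ltW ln2_gt0.
by case: n => [|n]; [rewrite ln0 | apply: ln_ge0; rewrite ler1n].
Qed.

Lemma ler_log2_natr m n : (m <= n)%N -> log2 (m%:R : R) <= log2 (n%:R : R).
Proof.
case: m => [_|m mn]; first by rewrite /log2 ln0 // mul0r log2_natr_ge0.
apply: ler_wpM2r; first by rewrite invr_ge0 ltW ?ln2_gt0.
by rewrite ler_ln ?posrE ?ltr0n ?ler_nat //; apply: leq_trans mn.
Qed.

End log2_natr.

Theorem fact2p3 (R : realType) :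
  (forall s t k : nat, (0 < s)%N -> (0 < t)%N -> (0 < k)%N ->
     (s * t <= k ^ 2)%N -> (ramsey s t <= ramsey k k)%N) ->
  limn_esup (fun k : nat => (log2 ((ramsey k k)%:R : R) / k%:R)%:E)
  = limn_esup (fun t : nat =>
      \big[Order.max/-oo%E]_(1 <= s < t.+1)
        (log2 ((ramsey s t)%:R : R) / Num.sqrt ((s * t)%:R))%:E).
Proof.
move=> ramsey_le_diag.
apply: (@limn_esup_diag_rate R (fun s t => log2 (ramsey s t)%:R)).
  by move=> k; exact: log2_natr_ge0.
by move=> s t k *; apply/ler_log2_natr/ramsey_le_diag.
Qed.
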